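(* Let $0\le k\le n$. There are exactly $k(n-k)+1$ isomorphism classes of matroids of rank $k$ on $n$ elements of the form $\mathsf{U}_{0,m}\oplus\mathsf{T}_{k-\ell,n-\ell-m}\oplus\mathsf{U}_{\ell,\ell}$, and the Tutte polynomials of representatives of these classes are linearly independent in $\mathbb{Z}[x,y]$.
   Context: $\mathsf{U}_{r,m}$ is the uniform matroid of rank $r$ on $m$ elements. For $0\le k\le n$, $\mathsf{T}_{k,n}$ is the minimal matroid: the matroid on $[n]$ whose bases are the $k$-subsets $B$ with $|B\cap\{1,\dots,k\}|\ge k-1$ (equivalently, the cycle matroid of a cycle of length $k+1$ with one edge replaced by $n-k$ parallel edges). *)

(* Z[x,y] is {mpoly int[2]} (multinomials), x = 'X_0, y = 'X_1. *)
From HB Require Import structures.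
From mathcomp Require Import all_boot all_order all_algebra.
From mathcomp Require Import mpoly.
Set Implicit Arguments. Unset Strict Implicit. Unset Printing Implicit Defensive.
Import GRing.Theory.

Definition bases_fam (E : finType) := {set {set E}}.

Definition is_matroid (E : finType) (M : bases_fam E) : Prop :=
  (exists B, B \in M) /\
  forall B1 B2, B1 \in M -> B2 \in M -> forall x, x \in B1 :\: B2 ->
    exists2 y, y \in B2 :\: B1 & (y |: (B1 :\ x)) \in M.

Definition mrank (E : finType) (M : bases_fam E) (A : {set E}) : nat :=
  \max_(B in M) #|A :&: B|.

Definition mrk (E : finType) (M : bases_fam E) : nat := mrank M [set: E].

Definition miso (E1 E2 : finType) (M1 : bases_fam E1) (M2 : bases_fam E2) : Prop :=
  exists f : E1 -> E2, bijective f /\ forall X : {set E1}, (X \in M1) = (f @: X \in M2).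

Definition tutte (E : finType) (M : bases_fam E) : {mpoly int[2]} :=
  \sum_(A : {set E})
    ('X_(0 : 'I_2) - 1) ^+ (mrk M - mrank M A) *
    ('X_(1 : 'I_2) - 1) ^+ (#|A| - mrank M A).

Definition Uni (r m : nat) : bases_fam 'I_m := [set X : {set 'I_m} | #|X| == r].

(* Minimal matroid T_{k,n} on 'I_n (elements 0..k-1 form {1,...,k}):
   bases are the k-subsets B with |B ∩ {1..k}| >= k-1. *)
Definition Tmin (k n : nat) : bases_fam 'I_n :=
  [set X : {set 'I_n} | (#|X| == k) && (k <= #|X :&: [set i : 'I_n | i < k]|.+1)].

Definition dsum (E1 E2 : finType) (M1 : bases_fam E1) (M2 : bases_fam E2)
  : bases_fam (E1 + E2)%type :=
  [set X : {set E1 + E2} | [exists B1 in M1, exists B2 in M2,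
      X == (inl @: B1) :|: (inr @: B2)]].

Definition Fam (k n l m : nat)
  : bases_fam ('I_m + ('I_(n - l - m) + 'I_l))%type :=
  dsum (Uni 0 m) (dsum (Tmin (k - l) (n - l - m)) (Uni l l)).

(* Admissible parameters (l, m): 0 <= l <= k and 0 <= m <= n - k
   (equivalently all three summands make sense: k - l <= n - l - m). *)
Definition valid_par (k n : nat) (p : nat * nat) : bool := (p.1 <= k) && (p.2 <= n - k).

(* The Tutte polynomial is multiplicative on direct sums, so the member of the
   family with parameters (l, m) has Tutte polynomial
     y^m x^l (x^a + y^p - 1 + (1 + ... + x^(a-1)) (1 + ... + y^(p-1)))
   with a = k - l and p = n - k - m.  If l = k or m = n - k the matroid has a
   single basis, of size k, so all these members are isomorphic; the other
   k(n-k) parameter pairs give pairwise distinct polynomials.  Suitable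
   monomials make the coefficient matrix of these k(n-k)+1 polynomials
   triangular, which yields their linear independence and hence also that the
   classes are pairwise non-isomorphic. *)

From HB Require Import structures.
From mathcomp Require Import all_boot all_order all_algebra.
From mathcomp Require Import mpoly.
From mathcomp Require Import zify ring.
Import GRing.Theory.
Set Implicit Arguments. Unset Strict Implicit. Unset Printing Implicit Defensive.

Local Notation xvar := ('X_(0%R : 'I_2) : {mpoly int[2]}).
Local Notation yvar := ('X_(1%R : 'I_2) : {mpoly int[2]}).

Section SumSet.
Variables E1 E2 : finType.
Implicit Types (A C : {set E1}) (B D : {set E2}) (X : {set E1 + E2}).

Definition sumset A B : {set E1 + E2} := inl @: A :|: inr @: B.
Definition setl X : {set E1} := [set x | inl x \in X].
Definition setr X : {set E2} := [set x | inr x \in X].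

Lemma in_sumsetl A B x : (inl x \in sumset A B) = (x \in A).
Proof.
have nB : (inl x \in inr @: B) = false by apply/imsetP => -[].
by rewrite in_setU nB orbF mem_imset //; exact: inl_inj.
Qed.

Lemma in_sumsetr A B x : (inr x \in sumset A B) = (x \in B).
Proof.
have nA : (inr x \in inl @: A) = false by apply/imsetP => -[].
by rewrite in_setU nA mem_imset //; exact: inr_inj.
Qed.

Definition in_sumset := (in_sumsetl, in_sumsetr).

Lemma sumset_lr X : sumset (setl X) (setr X) = X.
Proof. by apply/setP => -[x|x]; rewrite in_sumset inE. Qed.

Lemma setl_sumset A B : setl (sumset A B) = A.
Proof. by apply/setP => x; rewrite inE in_sumset. Qed.

Lemma setr_sumset A B : setr (sumset A B) = B.
Proof. by apply/setP => x; rewrite inE in_sumset. Qed.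

Lemma sumset_inj A B C D : sumset A B = sumset C D -> A = C /\ B = D.
Proof.
move=> e; move: (congr1 setl e) (congr1 setr e).
by rewrite !setl_sumset !setr_sumset.
Qed.

Lemma setI_sumset A B C D : sumset A B :&: sumset C D = sumset (A :&: C) (B :&: D).
Proof. by apply/setP => -[x|x]; rewrite in_setI !in_sumset in_setI. Qed.

Lemma sumsetT : sumset [set: E1] [set: E2] = [set: E1 + E2].
Proof. by apply/setP => -[x|x]; rewrite in_sumset !in_setT. Qed.

Lemma card_sumset A B : #|sumset A B| = #|A| + #|B|.
Proof.
rewrite cardsU !card_imset; try exact: inl_inj; try exact: inr_inj.
suff -> : inl @: A :&: inr @: B = set0 by rewrite cards0 subn0.
apply/setP => -[x|x]; rewrite !inE; apply/andP => -[].
  by move=> _ /imsetP[].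
by case/imsetP.
Qed.

Lemma big_sumset (R : nmodType) (F : {set E1 + E2} -> R) :
  (\sum_X F X = \sum_A \sum_B F (sumset A B))%R.
Proof.
rewrite pair_big (reindex (fun p => sumset p.1 p.2)) //=.
exists (fun X => (setl X, setr X)) => [[A B] _|X _] /=.
  by rewrite setl_sumset setr_sumset.
exact: sumset_lr.
Qed.

End SumSet.

Section Rank.
Variable E : finType.
Implicit Types (M : bases_fam E) (A B : {set E}).

Lemma leq_mrank M A B : B \in M -> #|A :&: B| <= mrank M A.
Proof. exact: leq_bigmax_cond. Qed.

Lemma mrank_attained M A : (exists B, B \in M) -> exists2 B, B \in M & mrank M A = #|A :&: B|.
Proof. by move=> /card_gt0P M0; have [B] := eq_bigmax_cond (fun B => #|A :&: B|) M0; exists B. Qed.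

Lemma mrank_eq M A r : (forall B, B \in M -> #|A :&: B| <= r) ->
  (exists2 B, B \in M & r <= #|A :&: B|) -> mrank M A = r.
Proof.
move=> le_r [B MB ge_r]; apply/eqP; rewrite eqn_leq.
by rewrite (leq_trans ge_r (leq_mrank _ MB)) andbT; apply/bigmax_leqP.
Qed.

Lemma mrank_le_card M A : mrank M A <= #|A|.
Proof. by apply/bigmax_leqP => B _; rewrite subset_leq_card ?subsetIl. Qed.

Lemma mrank_le_mrk M A : mrank M A <= mrk M.
Proof.
apply/bigmax_leqP => B MB; apply: leq_trans (leq_mrank _ MB).
by rewrite subset_leq_card ?setSI ?subsetT.
Qed.

Lemma mrank_set1 B A : mrank [set B] A = #|A :&: B|.
Proof. by rewrite /mrank big_set1. Qed.

Lemma is_matroid_set1 B : is_matroid [set B].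
Proof.
split; first by exists B; rewrite inE.
by move=> B1 B2; rewrite !inE => /eqP -> /eqP -> x; rewrite setDv inE.
Qed.

End Rank.

Section DirectSum.
Variables (E1 E2 : finType) (M1 : bases_fam E1) (M2 : bases_fam E2).

Lemma mem_dsum X : X \in dsum M1 M2 ->
  exists B1 B2, [/\ B1 \in M1, B2 \in M2 & X = sumset B1 B2].
Proof.
rewrite inE => /existsP[B1 /andP[MB1 /existsP[B2 /andP[MB2 /eqP ->]]]].
by exists B1, B2.
Qed.

Lemma sumset_in_dsum B1 B2 : (sumset B1 B2 \in dsum M1 M2) = (B1 \in M1) && (B2 \in M2).
Proof.
apply/idP/andP => [/mem_dsum[C1 [C2 [MC1 MC2 /sumset_inj[-> ->]]]] //|[MB1 MB2]].
by rewrite inE; apply/existsP; exists B1; rewrite MB1 /=; apply/existsP; exists B2; rewrite MB2 /=.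
Qed.

Lemma dsum_neq0 : (exists B, B \in M1) -> (exists B, B \in M2) -> exists B, B \in dsum M1 M2.
Proof. by move=> [B1 MB1] [B2 MB2]; exists (sumset B1 B2); rewrite sumset_in_dsum MB1. Qed.

Hypotheses (M1_neq0 : exists B, B \in M1) (M2_neq0 : exists B, B \in M2).

Lemma mrank_dsum A1 A2 : mrank (dsum M1 M2) (sumset A1 A2) = mrank M1 A1 + mrank M2 A2.
Proof.
apply: mrank_eq => [X /mem_dsum[B1 [B2 [MB1 MB2 ->]]]|].
  by rewrite setI_sumset card_sumset leq_add ?leq_mrank.
have [B1 MB1 ->] := mrank_attained A1 M1_neq0.
have [B2 MB2 ->] := mrank_attained A2 M2_neq0.
by exists (sumset B1 B2); rewrite ?sumset_in_dsum ?MB1 // setI_sumset card_sumset.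
Qed.

Lemma mrk_dsum : mrk (dsum M1 M2) = mrk M1 + mrk M2.
Proof. by rewrite /mrk -sumsetT mrank_dsum. Qed.

Lemma tutte_dsum : tutte (dsum M1 M2) = (tutte M1 * tutte M2)%R.
Proof.
rewrite /tutte big_sumset mulr_suml; apply: eq_bigr => A1 _.
rewrite mulr_sumr; apply: eq_bigr => A2 _.
rewrite mrk_dsum mrank_dsum card_sumset mulrACA -!exprD.
have := mrank_le_mrk M1 A1; have := mrank_le_mrk M2 A2.
have := mrank_le_card M1 A1; have := mrank_le_card M2 A2.
(* The rank bounds make the truncated subtractions add up. *)
by move=> *; congr (_ ^+ _ * _ ^+ _)%R; lia.
Qed.

Hypotheses (M1_matroid : is_matroid M1) (M2_matroid : is_matroid M2).

Lemma is_matroid_dsum : is_matroid (dsum M1 M2).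
Proof.
split; first exact: dsum_neq0.
move=> _ _ /mem_dsum[P1 [P2 [MP1 MP2 ->]]] /mem_dsum[Q1 [Q2 [MQ1 MQ2 ->]]] [x|x].
  rewrite in_setD !in_sumset -in_setD => xPQ.
  have [y yQP My] := M1_matroid.2 P1 Q1 MP1 MQ1 x xPQ.
  exists (inl y); first by rewrite in_setD !in_sumset -in_setD.
  suff -> : inl y |: (sumset P1 P2 :\ inl x) = sumset (y |: (P1 :\ x)) P2.
    by rewrite sumset_in_dsum My.
  by apply/setP => -[z|z]; rewrite !(in_setU1, in_setD1, in_sumset).
rewrite in_setD !in_sumset -in_setD => xPQ.
have [y yQP My] := M2_matroid.2 P2 Q2 MP2 MQ2 x xPQ.
exists (inr y); first by rewrite in_setD !in_sumset -in_setD.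
suff -> : inr y |: (sumset P1 P2 :\ inr x) = sumset P1 (y |: (P2 :\ x)).
  by rewrite sumset_in_dsum My MP1.
by apply/setP => -[z|z]; rewrite !(in_setU1, in_setD1, in_sumset).
Qed.

End DirectSum.

Lemma dsum_set1 (E1 E2 : finType) (B1 : {set E1}) (B2 : {set E2}) :
  dsum [set B1] [set B2] = [set sumset B1 B2].
Proof.
apply/setP => X; rewrite in_set1; apply/idP/eqP => [|->].
  by case/mem_dsum => [C1 [C2 []]]; rewrite !inE => /eqP -> /eqP ->.
by rewrite sumset_in_dsum !inE !eqxx.
Qed.

Lemma miso_refl (E : finType) (M : bases_fam E) : miso M M.
Proof. by exists id; split=> [|X]; [exists id | rewrite imset_id]. Qed.

Lemma imset_bij (T1 T2 : finType) (f : T1 -> T2) :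
  bijective f -> bijective (fun A : {set T1} => f @: A).
Proof.
case=> g fK gK; exists (fun B : {set T2} => g @: B) => A.
  by rewrite -imset_comp (eq_imset _ fK) imset_id.
by rewrite -imset_comp (eq_imset _ gK) imset_id.
Qed.

Lemma tutte_miso (E1 E2 : finType) (M1 : bases_fam E1) (M2 : bases_fam E2) :
  miso M1 M2 -> tutte M1 = tutte M2.
Proof.
case=> f [f_bij M12]; have f_inj := bij_inj f_bij.
have mrank_imset (A : {set E1}) : mrank M2 (f @: A) = mrank M1 A.
  rewrite /mrank (reindex _ (onW_bij _ (imset_bij f_bij))) /=.
  apply: eq_big => [B|B _]; first by rewrite M12.
  by rewrite -imsetI ?card_imset // => ? ? _ _; apply: f_inj.
have mrk12 : mrk M2 = mrk M1.
  rewrite /mrk -mrank_imset; congr mrank; apply/setP => y; rewrite in_setT.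
  by have [g _ gK] := f_bij; rewrite -[y]gK imset_f ?in_setT.
rewrite /tutte [RHS](reindex _ (onW_bij _ (imset_bij f_bij))) /=.
by apply: eq_bigr => A _; rewrite mrk12 mrank_imset card_imset.
Qed.

Section SingleBasisIso.
Variables (E1 E2 : finType) (B1 : {set E1}) (B2 : {set E2}).
Hypotheses (card_E : #|E1| = #|E2|) (card_B : #|B1| = #|B2|).

(* List each ground set with its basis first; matching positions gives the isomorphism. *)
Let s1 := enum B1 ++ enum (~: B1).
Let s2 := enum B2 ++ enum (~: B2).

Let s1_uniq : uniq s1.
Proof.
by rewrite cat_uniq !enum_uniq andbT; apply/hasPn => x; rewrite !mem_enum inE => /negbTE ->.
Qed.

Let s2_uniq : uniq s2.
Proof.
by rewrite cat_uniq !enum_uniq andbT; apply/hasPn => x; rewrite !mem_enum inE => /negbTE ->.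
Qed.

Let mem_s1 x : x \in s1.
Proof. by rewrite mem_cat !mem_enum inE orbN. Qed.

Let mem_s2 y : y \in s2.
Proof. by rewrite mem_cat !mem_enum inE orbN. Qed.

Let size_s1 : size s1 = #|E1|.
Proof. by rewrite size_cat -!cardE cardsC. Qed.

Let size_s2 : size s2 = #|E2|.
Proof. by rewrite size_cat -!cardE cardsC. Qed.

(* The default elements only serve to make [nth] total; they are never reached. *)
Let f x := nth (enum_val (cast_ord card_E (enum_rank x))) s2 (index x s1).
Let g y := nth (enum_val (cast_ord (esym card_E) (enum_rank y))) s1 (index y s2).

Let fK : cancel f g.
Proof. by move=> x; rewrite /g /f index_uniq ?nth_index // size_s2 -card_E -size_s1 index_mem. Qed.

Let gK : cancel g f.
Proof. by move=> y; rewrite /g /f index_uniq ?nth_index // size_s1 card_E -size_s2 index_mem. Qed.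

Let f_B1 : f @: B1 = B2.
Proof.
apply/eqP; rewrite eqEcard card_imset ?card_B ?leqnn ?andbT; last exact: can_inj fK.
apply/subsetP => _ /imsetP[x xB1 ->].
have ltx : index x (enum B1) < size (enum B2) by rewrite -cardE -card_B cardE index_mem mem_enum.
by rewrite /f index_cat mem_enum xB1 nth_cat ltx -(mem_enum (mem B2)) mem_nth.
Qed.

Lemma miso_set1 : miso [set B1] [set B2].
Proof.
exists f; split=> [|X]; first by exists g.
by rewrite !inE -f_B1; apply/eqP/eqP => [->|/(imset_inj (can_inj fK))].
Qed.

End SingleBasisIso.

Lemma sum_set_card (R : nmodType) (T : finType) (F : nat -> R) :
  (\sum_(A : {set T}) F #|A| = \sum_(s < #|T|.+1) F s *+ 'C(#|T|, s))%R.
Proof.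
rewrite (partition_big (fun A : {set T} => inord #|A| : 'I_#|T|.+1) xpredT) //=.
apply: eq_bigr => s _; rewrite -card_draws -sumr_const.
apply: eq_big => A; rewrite -(inj_eq val_inj) /= inordK ?ltnS ?max_card //.
  by rewrite inE.
by move=> /eqP ->.
Qed.

Lemma Uni0 m : Uni 0 m = [set set0].
Proof. by apply/setP => X; rewrite !inE cards_eq0. Qed.

Lemma Uni_full l : Uni l l = [set setT].
Proof.
apply/setP => X; rewrite !inE eqEcard subsetT cardsT card_ord /=.
by have := max_card X; rewrite card_ord eqn_leq => ->.
Qed.

Lemma tutte_Uni0 m : tutte (Uni 0 m) = (yvar ^+ m)%R.
Proof.
rewrite Uni0 /tutte /mrk.
under eq_bigr => A _ do rewrite !mrank_set1 !setI0 cards0 !subn0 expr0 mul1r.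
by rewrite sum_set_card card_ord -exprD1n subrK.
Qed.

Lemma tutte_Uni_full l : tutte (Uni l l) = (xvar ^+ l)%R.
Proof.
rewrite Uni_full /tutte /mrk.
under eq_bigr => A _ do rewrite !mrank_set1 !setIT cardsT card_ord subnn expr0 mulr1.
rewrite (sum_set_card _ (fun s => (xvar - 1) ^+ (l - s))%R) card_ord.
by rewrite -[in RHS](subrK 1%R xvar) exprDn; apply: eq_bigr => i _; rewrite expr1n mulr1.
Qed.

Lemma cards_exchange (T : finType) (B : {set T}) x y :
  x \in B -> y \notin B -> #|y |: (B :\ x)| = #|B|.
Proof. by move=> xB yB; rewrite cardsU1 in_setD1 (negbTE yB) andbF (cardsD1 x B) xB. Qed.

Section MinimalMatroid.
Variables a N : nat.
Hypothesis le_aN : a <= N.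

Definition iseg : {set 'I_N} := [set i : 'I_N | i < a].

Lemma card_iseg : #|iseg| = a.
Proof.
have -> : iseg = widen_ord le_aN @: [set: 'I_a].
  apply/setP => i; rewrite inE; apply/idP/imsetP => [lt_ia|[j _ ->]]; last by rewrite /= ltn_ord.
  by exists (Ordinal lt_ia); rewrite ?inE //; apply/val_inj.
by rewrite card_imset ?cardsT ?card_ord // => i j /(congr1 val) /= /val_inj.
Qed.

Lemma mem_Tmin X : (X \in Tmin a N) = (#|X| == a) && (a <= #|X :&: iseg|.+1).
Proof. by rewrite inE. Qed.

Lemma iseg_in_Tmin : iseg \in Tmin a N.
Proof. by rewrite mem_Tmin setIid card_iseg eqxx leqnSn. Qed.

Lemma Tmin_neq0 : exists B, B \in Tmin a N.
Proof. by exists iseg; exact: iseg_in_Tmin. Qed.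

Lemma card_setD_iseg_Tmin B : B \in Tmin a N -> #|B :\: iseg| <= 1.
Proof. by rewrite mem_Tmin -(cardsID iseg B) => /andP[/eqP <-]; lia. Qed.

Section TminRank.
Variable S : {set 'I_N}.
Let s := #|S :&: iseg|.
Let t := #|S :\: iseg|.

Lemma mrank_Tmin_ub B : B \in Tmin a N -> #|S :&: B| <= s + ((0 < t) && (s < a)).
Proof.
move=> TB; have := card_setD_iseg_Tmin TB; move: TB; rewrite mem_Tmin => /andP[/eqP cB _].
have le_sa : s <= a by rewrite -card_iseg subset_leq_card ?subsetIr.
have le_SB_B : #|S :&: B| <= #|B| by rewrite subset_leq_card ?subsetIr.
have le_SBL : #|S :&: B :&: iseg| <= s by rewrite subset_leq_card ?setSI ?subsetIl.
have le_SBD : #|S :&: B :\: iseg| <= t by rewrite subset_leq_card ?setSD ?subsetIl.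
have le_SBDB : #|S :&: B :\: iseg| <= #|B :\: iseg| by rewrite subset_leq_card ?setSD ?subsetIr.
rewrite -(cardsID iseg (S :&: B)) in le_SB_B *.
set u := #|S :&: B :&: iseg| in le_SBL le_SB_B *.
set v := #|S :&: B :\: iseg| in le_SBD le_SBDB le_SB_B *.
set w := #|B :\: iseg| in le_SBDB *.
by case: (ltnP 0 t); case: (ltnP s a) => /=; lia.
Qed.

Lemma mrank_Tmin_witness : exists2 B, B \in Tmin a N & s + ((0 < t) && (s < a)) <= #|S :&: B|.
Proof.
case: (ltnP 0 t) => [t_gt0|]; case: (ltnP s a) => //= [lt_sa|];
  try by exists iseg; rewrite ?iseg_in_Tmin ?addn0.
have [x] := card_gt0P t_gt0; rewrite inE => /andP[xL xS].
have [y] : exists y, y \in iseg :\: S.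
  by apply/card_gt0P; rewrite cardsD setIC card_iseg -/s subn_gt0.
rewrite inE => /andP[yS yL].
exists (x |: (iseg :\ y)).
  rewrite mem_Tmin -{1}card_iseg cards_exchange // eqxx /=.
  rewrite -{1}card_iseg (cardsD1 y) yL ltnS subset_leq_card //.
  by apply/subsetP => z; rewrite !inE => /andP[-> ->]; rewrite orbT.
have <- : #|x |: (S :&: iseg)| = s + 1 by rewrite cardsU1 inE (negbTE xL) andbF addnC.
apply: subset_leq_card; apply/subsetP => z; rewrite !inE.
case/orP=> [/eqP -> | /andP[zS ->]]; first by rewrite xS eqxx.
by rewrite zS andbT; apply/orP; right; apply: contraNneq yS => <-.
Qed.

Lemma mrank_Tmin : mrank (Tmin a N) S = s + ((0 < t) && (s < a)).
Proof. exact: mrank_eq mrank_Tmin_ub mrank_Tmin_witness. Qed.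

End TminRank.

Lemma mrk_Tmin : mrk (Tmin a N) = a.
Proof. by rewrite /mrk mrank_Tmin setTI card_iseg ltnn andbF addn0. Qed.

(* Exchange [x] for an element of [B2 :\: B1] inside [iseg] if there is one;
   otherwise [B2 :&: iseg] survives any exchange. *)
Lemma is_matroid_Tmin : is_matroid (Tmin a N).
Proof.
split; first exact: Tmin_neq0.
move=> B1 B2 TB1 TB2 x; rewrite inE => /andP[xB2 xB1].
move: (TB1) (TB2); rewrite !mem_Tmin => /andP[/eqP cB1 LB1] /andP[/eqP cB2 LB2].
have card_exchange y : y \notin B1 -> #|y |: (B1 :\ x)| == a.
  by move=> yB1; rewrite cards_exchange ?cB1.
have [/existsP[y] | /existsPn noL] := boolP [exists y, y \in (B2 :\: B1) :&: iseg].
  rewrite !inE => /andP[/andP[yB1 yB2] yL]; exists y; first by rewrite inE yB1.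
  rewrite mem_Tmin card_exchange //=; apply: leq_trans LB1 _; rewrite ltnS.
  have le_B1L : #|B1 :&: iseg| <= #|y |: (B1 :&: iseg :\ x)|.
    by rewrite cardsU1 !inE (negbTE yB1) andbF /= (cardsD1 x (B1 :&: iseg)) leq_add2r leq_b1.
  apply: leq_trans le_B1L (subset_leq_card _); apply/subsetP => z.
  by rewrite !inE => /orP[/eqP -> | /and3P[-> -> ->]]; rewrite ?eqxx ?yL ?orbT.
have [y] : exists y, y \in B2 :\: B1.
  apply/card_gt0P; have -> : #|B2 :\: B1| = #|B1 :\: B2| by rewrite !cardsD setIC cB1 cB2.
  by apply/card_gt0P; exists x; rewrite inE xB2.
rewrite inE => /andP[yB1 yB2]; exists y; first by rewrite inE yB1.
rewrite mem_Tmin card_exchange //=; apply: leq_trans LB2 _; rewrite ltnS.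
apply: subset_leq_card; apply/subsetP => z; rewrite !inE => /andP[zB2 zL].
rewrite zL andbT; apply/orP; right; apply/andP; split; first by apply: contraNneq xB2 => <-.
by apply: contraT => zB1; have := noL z; rewrite !inE zB1 zB2 zL.
Qed.

End MinimalMatroid.

Lemma Tmin0 N : Tmin 0 N = [set set0].
Proof. by apply/setP => X; rewrite inE in_set1 cards_eq0 andbT. Qed.

Lemma Tmin_full a : Tmin a a = [set setT].
Proof.
apply/setP => X; rewrite mem_Tmin in_set1 eqEcard subsetT cardsT card_ord /=.
have -> : iseg a a = setT by apply/setP => i; rewrite !inE ltn_ord.
rewrite setIT.
have le_Xa : #|X| <= a by rewrite -[a in _ <= a]card_ord max_card.
by rewrite eqn_leq le_Xa andb_idr //; exact: leqW.
Qed.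

Section BinomialSums.
Local Open Scope ring_scope.
Variable R : comPzRingType.
Implicit Types u v : R.

Lemma sum_exprD1 v p : \sum_(j < p) (v + 1) ^+ j = \sum_(j < p) v ^+ j *+ 'C(p, j.+1).
Proof.
elim: p => [|p IHp]; first by rewrite !big_ord0.
rewrite big_ord_recr /= IHp exprD1n.
rewrite [RHS](eq_bigr (fun j : 'I_p.+1 => v ^+ j *+ 'C(p, j.+1) + v ^+ j *+ 'C(p, j))); last first.
  by move=> j _; rewrite binS mulrnDr.
by rewrite big_split /= [X in _ = X + _]big_ord_recr /= bin_small // mulr0n addr0.
Qed.

Lemma sum_expr_subS_bin u a : \sum_(s < a) u ^+ (a - s.+1) *+ 'C(a, s) = \sum_(i < a) (u + 1) ^+ i.
Proof.
rewrite sum_exprD1 (reindex_inj rev_ord_inj) /=; apply: eq_bigr => s _.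
have lt_sa := ltn_ord s; rewrite bin_sub //; congr (u ^+ _ *+ _); lia.
Qed.

Lemma sum_expr_sub_bin u a : \sum_(s < a) u ^+ (a - s) *+ 'C(a, s) = (u + 1) ^+ a - 1.
Proof.
rewrite exprDn big_ord_recr /= subnn binn expr1n !mulr1 mulr1n addrK.
by apply: eq_bigr => s _; rewrite expr1n mulr1.
Qed.

Definition tmin_poly (x y : R) a p : R :=
  x ^+ a + y ^+ p - 1 + (\sum_(i < a) x ^+ i) * (\sum_(j < p) y ^+ j).

(* The summand of [tutte (Tmin a (a + p))] at a set with [s] elements among
   the first [a] and [t] among the last [p]; by [mrank_Tmin] its rank is [r]. *)
Definition tmin_term u v a s t : R :=
  let r := (s + ((0 < t) && (s < a)))%N in u ^+ (a - r) * v ^+ (s + t - r).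

Lemma sum_tmin_term u v a p :
  \sum_(s < a.+1) (\sum_(t < p.+1) tmin_term u v a s t *+ 'C(p, t)) *+ 'C(a, s)
  = tmin_poly (u + 1) (v + 1) a p.
Proof.
have full_row : \sum_(t < p.+1) tmin_term u v a a t *+ 'C(p, t) = (v + 1) ^+ p.
  by rewrite exprD1n; apply: eq_bigr => t _; rewrite /tmin_term ltnn andbF addn0 subnn addKn mul1r.
have low_row (s : 'I_a) : \sum_(t < p.+1) tmin_term u v a s t *+ 'C(p, t)
    = u ^+ (a - s) + u ^+ (a - s.+1) * \sum_(j < p) (v + 1) ^+ j.
  rewrite big_ord_recl sum_exprD1 mulr_sumr /tmin_term /= addn0 subnn mulr1 bin0.
  congr (_ + _); apply: eq_bigr => j _.
  by rewrite /bump /= ltn_ord addn1 addnS subSS addKn mulrnAr.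
rewrite big_ord_recr /= full_row binn mulr1n.
under eq_bigr => s _ do rewrite low_row mulrnDl -mulrnAl.
rewrite big_split /= -mulr_suml sum_expr_sub_bin sum_expr_subS_bin /tmin_poly.
by rewrite addrAC (addrAC _ (-1)).
Qed.

End BinomialSums.

Lemma iseg_unsplit a p : iseg a (a + p) = unsplit @: sumset [set: 'I_a] set0.
Proof.
apply/setP => i; rewrite inE -(splitK i) ltn_unsplit mem_imset; last exact: can_inj unsplitK.
by case: (split i) => j; rewrite in_sumset inE.
Qed.

Section UnsplitIseg.
Variables (a p : nat) (A : {set 'I_a}) (B : {set 'I_p}).
Let S := unsplit @: sumset A B.
Let unsplit_inj : injective (@unsplit a p) := can_inj unsplitK.

Lemma card_unsplit : #|S| = #|A| + #|B|.
Proof. by rewrite (card_imset _ unsplit_inj) card_sumset. Qed.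

Lemma card_unsplitI_iseg : #|S :&: iseg a (a + p)| = #|A|.
Proof.
rewrite iseg_unsplit -imsetI; last by move=> ? ? _ _; apply: unsplit_inj.
by rewrite setI_sumset setIT setI0 (card_imset _ unsplit_inj) card_sumset cards0 addn0.
Qed.

Lemma card_unsplitD_iseg : #|S :\: iseg a (a + p)| = #|B|.
Proof. by rewrite cardsD card_unsplitI_iseg card_unsplit addKn. Qed.

End UnsplitIseg.

Lemma tutte_Tmin a p : tutte (Tmin a (a + p)) = tmin_poly xvar yvar a p.
Proof.
have unsplit_bij : bijective (@unsplit a p) := Bijective unsplitK splitK.
rewrite /tutte mrk_Tmin ?leq_addr // (reindex _ (onW_bij _ (imset_bij unsplit_bij))) /=.
transitivity (\sum_(A : {set 'I_a}) \sum_(B : {set 'I_p})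
                tmin_term (xvar - 1) (yvar - 1) a #|A| #|B|)%R.
  rewrite big_sumset; apply: eq_bigr => A _; apply: eq_bigr => B _.
  by rewrite mrank_Tmin ?leq_addr // card_unsplit card_unsplitI_iseg card_unsplitD_iseg.
under eq_bigr => A _ do rewrite (sum_set_card _ (tmin_term _ _ a #|A|)).
rewrite (sum_set_card _ (fun s => \sum_(t < #|'I_p|.+1) tmin_term _ _ a s t *+ 'C(#|'I_p|, t))%R).
by rewrite !card_ord sum_tmin_term !subrK.
Qed.

Section Family.
Variables k n l m : nat.
Hypotheses (le_lk : l <= k) (le_m_nk : m <= n - k) (le_kn : k <= n).

Let le_Tmin : k - l <= n - l - m. Proof. lia. Qed.
Let Uni0_neq0 : exists B, B \in Uni 0 m.
Proof. by rewrite Uni0; exact: (is_matroid_set1 _).1. Qed.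
Let Uni_full_neq0 : exists B, B \in Uni l l.
Proof. by rewrite Uni_full; exact: (is_matroid_set1 _).1. Qed.
Let Tmin_Uni_neq0 := dsum_neq0 (Tmin_neq0 le_Tmin) Uni_full_neq0.

Lemma is_matroid_Fam : is_matroid (Fam k n l m).
Proof.
apply: is_matroid_dsum Uni0_neq0 Tmin_Uni_neq0 _ _; first by rewrite Uni0; exact: is_matroid_set1.
apply: is_matroid_dsum (Tmin_neq0 le_Tmin) Uni_full_neq0 (is_matroid_Tmin le_Tmin) _.
by rewrite Uni_full; exact: is_matroid_set1.
Qed.

Lemma mrk_Fam : mrk (Fam k n l m) = k.
Proof.
rewrite /Fam (mrk_dsum Uni0_neq0 Tmin_Uni_neq0) (mrk_dsum (Tmin_neq0 le_Tmin) Uni_full_neq0).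
rewrite mrk_Tmin // Uni0 Uni_full /mrk !mrank_set1 setI0 cards0 setIT cardsT card_ord; lia.
Qed.

Lemma card_Fam : #|[set: 'I_m + ('I_(n - l - m) + 'I_l)]| = n.
Proof. rewrite cardsT !card_sum !card_ord; lia. Qed.

Lemma tutte_Fam :
  tutte (Fam k n l m) = (yvar ^+ m * (tmin_poly xvar yvar (k - l) (n - k - m) * xvar ^+ l))%R.
Proof.
rewrite /Fam (tutte_dsum Uni0_neq0 Tmin_Uni_neq0) (tutte_dsum (Tmin_neq0 le_Tmin) Uni_full_neq0).
by rewrite tutte_Uni0 tutte_Uni_full (_ : n - l - m = k - l + (n - k - m)) ?tutte_Tmin //; lia.
Qed.

Lemma Fam_degenerate : l = k \/ m = n - k -> exists X, Fam k n l m = [set X] /\ #|X| = k.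
Proof.
rewrite /Fam Uni0 Uni_full => degenerate.
have [Y [-> cardY]] : exists Y, Tmin (k - l) (n - l - m) = [set Y] /\ #|Y| = k - l.
  case: degenerate => [->|em]; first by exists set0; rewrite subnn Tmin0 cards0.
  have e : n - l - m = k - l by lia.
  by rewrite e Tmin_full; exists setT; rewrite cardsT card_ord.
rewrite !dsum_set1; eexists; split; first reflexivity.
by rewrite !card_sumset cards0 cardsT card_ord cardY; lia.
Qed.

End Family.

Definition mxy (i j : nat) : 'X_{1..2} := (U_(0%R : 'I_2) *+ i + U_(1%R : 'I_2) *+ j)%MM.

Lemma mpolyX_mxy i j : 'X_[mxy i j] = (xvar ^+ i * yvar ^+ j)%R.
Proof. by rewrite mpolyXD !mpolyXn. Qed.

Lemma eq_mxy i j a b : (mxy i j == mxy a b) = (i == a) && (j == b).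
Proof.
apply/eqP/andP => [e|[/eqP -> /eqP ->] //].
have := congr1 (fun mu : 'X_{1..2} => mu (0%R : 'I_2)) e.
have := congr1 (fun mu : 'X_{1..2} => mu (1%R : 'I_2)) e.
by rewrite /= !mnmDE !mulmnE !mnm1E /=; lia.
Qed.

Lemma sum_nat_eq (R : pzSemiRingType) (l k a : nat) :
  (\sum_(l <= i < k) ((i == a)%:R : R) = ((l <= a) && (a < k))%N%:R)%R.
Proof.
rewrite -natr_sum; congr (_ %:R)%R.
elim: k => [|k IHk]; first by rewrite big_geq // ltn0 andbF.
case: (leqP l k) => [le_lk | lt_kl]; last by rewrite big_geq //; lia.
by rewrite big_nat_recr //= IHk; lia.
Qed.

Lemma tutte_Fam_expand k n l m : l <= k -> m <= n - k -> k <= n ->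
  tutte (Fam k n l m) = ('X_[mxy k m] + 'X_[mxy l (n - k)] - 'X_[mxy l m]
    + \sum_(l <= i < k) \sum_(m <= j < n - k) 'X_[mxy i j])%R.
Proof.
move=> le_lk le_m_nk le_kn.
have sum_shift (z : {mpoly int[2]}) a b : a <= b ->
    (\sum_(a <= i < b) z ^+ i = z ^+ a * \sum_(i < b - a) z ^+ i)%R.
  move=> le_ab; rewrite mulr_sumr -{1}[a]add0n big_addn big_mkord.
  by apply: eq_bigr => i _; rewrite -exprD addnC.
under eq_bigr => i _ do under eq_bigr => j _ do rewrite mpolyX_mxy.
under eq_bigr => i _ do rewrite -mulr_sumr.
rewrite -mulr_suml !sum_shift //.
rewrite tutte_Fam // /tmin_poly !mpolyX_mxy.
rewrite -[in (xvar ^+ k)%R](subnK le_lk) -[in (yvar ^+ (n - k))%R](subnKC le_m_nk) !exprD.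
by ring.
Qed.

Lemma mcoeff_tutte_Fam k n l m a b : l <= k -> m <= n - k -> k <= n ->
  mcoeff (mxy a b) (tutte (Fam k n l m)) =
    (((k == a) && (m == b))%N%:R + ((l == a) && (n - k == b))%N%:R - ((l == a) && (m == b))%N%:R
     + ((l <= a < k) && (m <= b < n - k))%N%:R : int)%R.
Proof.
move=> le_lk le_m_nk le_kn.
rewrite tutte_Fam_expand // !(mcoeffD, mcoeffN, mcoeffX, eq_mxy) raddf_sum /=.
under eq_bigr => i _ do rewrite raddf_sum /=.
under eq_bigr => i _ do under eq_bigr => j _ do rewrite mcoeffX eq_mxy -mulnb natrM.
by under eq_bigr => i _ do rewrite -mulr_sumr; rewrite -mulr_suml !sum_nat_eq -natrM mulnb.
Qed.

Definition nondeg k n (p : nat * nat) : bool := (p.1 < k) && (p.2 < n - k).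

Definition Fam_class k n (p : nat * nat) : option (nat * nat) :=
  if nondeg k n p then Some p else None.

(* [x^l y^(m+1)] occurs in the Tutte polynomial of the class of [(l, m)] but in
   none of the lexicographically larger classes; [x^k y^(n-k)] only in the
   degenerate one. *)
Definition Fam_witness k n (p : nat * nat) : 'X_{1..2} :=
  if nondeg k n p then mxy p.1 p.2.+1 else mxy k (n - k).

Definition lex_weight n (p : nat * nat) : nat := p.1 * n.+1 + p.2.

Lemma lex_weightP n p q : p.2 <= n -> q.2 <= n -> lex_weight n p <= lex_weight n q ->
  p.1 < q.1 \/ p.1 = q.1 /\ p.2 <= q.2.
Proof.
rewrite /lex_weight => le_p2 le_q2 le_pq.
case: (ltngtP p.1 q.1) => [|lt_qp|eq_pq]; [by left | | by right; split; lia].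
have : q.1.+1 * n.+1 <= p.1 * n.+1 by rewrite leq_mul2r lt_qp orbT.
lia.
Qed.

Lemma mcoeff_witness_tutte_Fam k n p q : k <= n -> valid_par k n p -> valid_par k n q ->
  lex_weight n p <= lex_weight n q ->
  mcoeff (Fam_witness k n p) (tutte (Fam k n q.1 q.2)) = (Fam_class k n p == Fam_class k n q)%:R%R.
Proof.
case: p q => [l m] [l' m'] le_kn /andP[/= le_lk le_m_nk] /andP[/= le_l'k le_m'_nk].
have [le_mn le_m'n] : m <= n /\ m' <= n by lia.
move=> /(@lex_weightP n (l, m) (l', m') le_mn le_m'n) /= lex.
rewrite /Fam_witness /Fam_class /nondeg /=.
case: ifP => nd; case: ifP => nd';
  by rewrite mcoeff_tutte_Fam //= ?(inj_eq Some_inj) ?xpair_eqE; lia.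
Qed.

Lemma tutte_Fam_class k n p q : k <= n -> valid_par k n p -> valid_par k n q ->
  tutte (Fam k n p.1 p.2) = tutte (Fam k n q.1 q.2) -> Fam_class k n p = Fam_class k n q.
Proof.
wlog le_pq : p q / lex_weight n p <= lex_weight n q.
  move=> wlog_pq le_kn vp vq tutte_pq.
  have [le|/ltnW le] := leqP (lex_weight n p) (lex_weight n q); first exact: wlog_pq.
  by symmetry; exact: wlog_pq.
move=> le_kn vp vq tutte_pq; apply/eqP.
have := mcoeff_witness_tutte_Fam le_kn vp vq le_pq.
by rewrite -tutte_pq mcoeff_witness_tutte_Fam // ?leqnn eqxx; case: (_ == _).
Qed.

Lemma triangular_free (R : idomainType) N (A : 'I_N -> 'I_N -> R) (w : 'I_N -> nat)
    (c : 'I_N -> R) :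
  (forall i, A i i != 0%R) -> (forall i j, i != j -> w i <= w j -> A i j = 0%R) ->
  (forall i, \sum_j c j * A i j = 0)%R -> forall i, c i = 0%R.
Proof.
move=> A_diag A_upper c_sol i; apply/eqP/negP => /negP c_i.
have [j c_j w_min] := @arg_minnP _ i (fun j => c j != 0%R) w c_i.
have := c_sol j; rewrite (bigD1 j) //= big1 ?addr0 => [/eqP|h h_j].
  by rewrite mulf_eq0 (negbTE c_j) (negbTE (A_diag j)).
have [-> | c_h] := eqVneq (c h) 0%R; first by rewrite mul0r.
by rewrite A_upper ?mulr0 // ?w_min // eq_sym.
Qed.

Lemma tutte_Fam_free k n (s : seq (nat * nat)) :
  k <= n -> all (valid_par k n) s -> uniq (map (Fam_class k n) s) ->
  forall c : nat -> int,
    (\sum_(i < size s) c i *: tutte (Fam k n (nth (0, 0) s i).1 (nth (0, 0) s i).2) = 0)%R ->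
  forall i, i < size s -> c i = 0%R.
Proof.
move=> le_kn /(all_nthP (0, 0)) s_valid s_uniq c comb i lt_is.
pose p (j : 'I_(size s)) := nth (0, 0) s j.
have p_valid j : valid_par k n (p j) by exact: s_valid.
have class_eq j h : (Fam_class k n (p j) == Fam_class k n (p h)) = (j == h).
  by rewrite /p -!(nth_map _ None) ?(nth_uniq None) ?size_map.
pose A j h := mcoeff (Fam_witness k n (p j)) (tutte (Fam k n (p h).1 (p h).2)).
apply: (@triangular_free _ _ A (fun j => lex_weight n (p j)) (fun j => c j) _ _ _ (Ordinal lt_is)).
- by move=> j; rewrite /A mcoeff_witness_tutte_Fam // eqxx oner_eq0.
- by move=> j h ne_jh le_jh; rewrite /A mcoeff_witness_tutte_Fam // class_eq (negbTE ne_jh).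
move=> j; rewrite -[RHS](mcoeff0 _ (Fam_witness k n (p j))) -comb raddf_sum.
by apply: eq_bigr => h _; rewrite /= mcoeffZ.
Qed.

Lemma miso_Fam_class k n p q : k <= n -> valid_par k n p -> valid_par k n q ->
  Fam_class k n p = Fam_class k n q -> miso (Fam k n p.1 p.2) (Fam k n q.1 q.2).
Proof.
case: p q => [l m] [l' m'] le_kn /andP[/= le_lk le_m_nk] /andP[/= le_l'k le_m'_nk].
rewrite /Fam_class /nondeg /=; case: ifP => nd; case: ifP => nd' eq_cls; try discriminate eq_cls.
  by case: eq_cls => -> ->; exact: miso_refl.
have deg : l = k \/ m = n - k by lia.
have deg' : l' = k \/ m' = n - k by lia.
have [X [-> card_X]] := Fam_degenerate le_lk le_m_nk le_kn deg.
have [Y [-> card_Y]] := Fam_degenerate le_l'k le_m'_nk le_kn deg'.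
apply: miso_set1; last by rewrite card_X card_Y.
by rewrite -!cardsT (card_Fam le_lk le_m_nk le_kn) (card_Fam le_l'k le_m'_nk le_kn).
Qed.

Definition Fam_reps k n : seq (nat * nat) :=
  (k, n - k) :: [seq (l, m) | l <- iota 0 k, m <- iota 0 (n - k)].

Lemma size_Fam_reps k n : size (Fam_reps k n) = k * (n - k) + 1.
Proof. by rewrite /= size_allpairs !size_iota addn1. Qed.

Lemma Fam_reps_valid k n : all (valid_par k n) (Fam_reps k n).
Proof.
rewrite /= {1}/valid_par !leqnn; apply/allP => _ /allpairsP[[l m] [/= l_lt m_lt ->]].
by move: l_lt m_lt; rewrite /valid_par !mem_iota /= => /ltnW -> /ltnW ->.
Qed.

Lemma Fam_reps_uniq k n : uniq (map (Fam_class k n) (Fam_reps k n)).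
Proof.
have nondeg_reps p : p \in [seq (l, m) | l <- iota 0 k, m <- iota 0 (n - k)] -> nondeg k n p.
  case/allpairsP => -[l m] [/= l_lt m_lt ->].
  by move: l_lt m_lt; rewrite /nondeg !mem_iota /= => -> ->.
rewrite /= {1}/Fam_class /nondeg /= ltnn /=.
have -> : map (Fam_class k n) [seq (l, m) | l <- iota 0 k, m <- iota 0 (n - k)] =
          map Some [seq (l, m) | l <- iota 0 k, m <- iota 0 (n - k)].
  by apply/eq_in_map => p /nondeg_reps nd; rewrite /Fam_class nd.
rewrite map_inj_uniq ?allpairs_uniq ?iota_uniq ?andbT //; last exact: Some_inj.
  by apply/mapP => -[].
by move=> [? ?] [? ?] _ _ [-> ->].
Qed.

Lemma Fam_reps_complete k n p : valid_par k n p ->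
  exists2 i, i < size (Fam_reps k n) &
    Fam_class k n p = Fam_class k n (nth (0, 0) (Fam_reps k n) i).
Proof.
case: p => l m /andP[/= le_lk le_m_nk].
case nd : (nondeg k n (l, m)).
  have mem_lm : (l, m) \in Fam_reps k n.
    move: nd; rewrite /nondeg /= => /andP[lt_lk lt_m_nk].
    by rewrite inE; apply/orP; right; apply/allpairsP; exists (l, m); rewrite !mem_iota.
  by exists (index (l, m) (Fam_reps k n)); rewrite ?index_mem ?nth_index.
by exists 0 => //; rewrite /Fam_class nd /nondeg /= ltnn.
Qed.

Lemma uniq_map_nthP (T U : eqType) (x0 : T) (f : T -> U) (s : seq T) :
  reflect (forall i j, i < size s -> j < size s -> i != j -> f (nth x0 s i) != f (nth x0 s j))
          (uniq (map f s)).
Proof.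
apply: (iffP (uniqP (f x0))) => [f_inj i j lt_i lt_j|f_ne i j].
  by apply: contra_neq => eq_f; apply: f_inj; rewrite ?inE ?size_map ?(nth_map x0).
rewrite !inE size_map => lt_i lt_j; rewrite !(nth_map x0) // => eq_f.
by apply/eqP; apply: contraT => /(f_ne i j lt_i lt_j); rewrite eq_f eqxx.
Qed.

Unset Implicit Arguments.
Theorem proposition4p12 (k n : nat) (hkn : k <= n) :
  (* every member of the family is a matroid of rank k on n elements *)
  (forall l m, valid_par k n (l, m) ->
     is_matroid (Fam k n l m) /\ mrk (Fam k n l m) = k /\
     #|[set: ('I_m + ('I_(n - l - m) + 'I_l))%type]| = n) /\
  (* exactly k(n-k)+1 isomorphism classes: a complete list of pairwise
     non-isomorphic representatives of that size *)
  (exists s : seq (nat * nat),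
     [/\ size s = k * (n - k) + 1,
         all (valid_par k n) s,
         (forall i j, i < size s -> j < size s -> i != j ->
            ~ miso (Fam k n (nth (0, 0) s i).1 (nth (0, 0) s i).2)
                   (Fam k n (nth (0, 0) s j).1 (nth (0, 0) s j).2)) &
         (forall l m, valid_par k n (l, m) ->
            exists2 i, i < size s &
              miso (Fam k n l m) (Fam k n (nth (0, 0) s i).1 (nth (0, 0) s i).2))]) /\
  (* Tutte polynomials of representatives of distinct classes are
     linearly independent in Z[x,y] *)
  (forall s : seq (nat * nat),
     all (valid_par k n) s ->
     (forall i j, i < size s -> j < size s -> i != j ->
        ~ miso (Fam k n (nth (0, 0) s i).1 (nth (0, 0) s i).2)
               (Fam k n (nth (0, 0) s j).1 (nth (0, 0) s j).2)) ->
     forall c : nat -> int,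
       (\sum_(i < size s)
          c i *: tutte (Fam k n (nth (0%N, 0%N) s i).1 (nth (0%N, 0%N) s i).2) = 0)%R ->
       forall i, i < size s -> c i = 0%R).
Proof.
split=> [l m /andP[le_lk le_m_nk] | ].
  by split; [exact: is_matroid_Fam | split; [exact: mrk_Fam | exact: card_Fam le_lk le_m_nk hkn]].
split.
  have /(all_nthP (0, 0)) reps_valid := Fam_reps_valid k n.
  exists (Fam_reps k n); split.
  - exact: size_Fam_reps.
  - exact: Fam_reps_valid.
  - move=> i j lt_i lt_j ne_ij /tutte_miso.
    move=> /(tutte_Fam_class hkn (reps_valid i lt_i) (reps_valid j lt_j)).
    by apply/eqP; move/uniq_map_nthP: (Fam_reps_uniq k n); apply.
  - move=> l m v; have [i lt_i eq_cls] := Fam_reps_complete v.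
    by exists i; last exact: miso_Fam_class v (reps_valid i lt_i) eq_cls.
move=> s s_valid s_noniso; have /(all_nthP (0, 0)) nth_valid := s_valid.
have s_uniq : uniq (map (Fam_class k n) s).
  apply/(uniq_map_nthP (0, 0)) => i j lt_i lt_j ne_ij; apply/eqP => eq_cls.
  exact: (s_noniso i j lt_i lt_j ne_ij
           (miso_Fam_class hkn (nth_valid i lt_i) (nth_valid j lt_j) eq_cls)).
exact: tutte_Fam_free hkn s_valid s_uniq.
Qed.
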